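(* Let $f\colon\boldsymbol{A}\to\boldsymbol{B}$ be a homomorphism between semilattices, $F$ a filter of $\boldsymbol{B}$, and $G\in\boldsymbol{A}_\ast$. If $f^{-1}[F]\subseteq G$ and the filter of $\boldsymbol{B}$ generated by $F\cup f[G]$ is disjoint from $f[A\smallsetminus G]$, then there exists $H\in\boldsymbol{B}_\ast$ such that $F\subseteq H$ and $G=f^{-1}[H]$.
   Context: A semilattice $\langle A;\land\rangle$ is ordered by $a\le b$ iff $a\land b=a$. A filter is a nonempty upset closed under binary meets. A filter is meet irreducible if it is proper and not the intersection of two filters both different from it. For a semilattice $\boldsymbol{A}$, $\boldsymbol{A}_\ast$ denotes the set (poset under inclusion) of meet irreducible filters of $\boldsymbol{A}$. *)

From HB Require Import structures.
From mathcomp Require Import all_boot all_order.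
Import Order.Theory.
Local Open Scope order_scope.

Section SemilatticeFilters.
Context {d : Order.disp_t} {A : meetSemilatticeType d}.

Definition is_filter (F : A -> Prop) : Prop :=
  (exists x, F x) /\
  (forall x y, F x -> x <= y -> F y) /\
  (forall x y, F x -> F y -> F (x `&` y)).

Definition proper_set (F : A -> Prop) : Prop := exists x, ~ F x.

Definition meet_irreducible (F : A -> Prop) : Prop :=
  is_filter F /\ proper_set F /\
  forall G1 G2 : A -> Prop, is_filter G1 -> is_filter G2 ->
    (forall x, F x <-> (G1 x /\ G2 x)) ->
    (forall x, G1 x <-> F x) \/ (forall x, G2 x <-> F x).

Definition gen_filter (S : A -> Prop) : A -> Prop :=
  fun x => forall G, is_filter G -> (forall y, S y -> G y) -> G x.

End SemilatticeFilters.

Definition img_set {T U : Type} (f : T -> U) (S : T -> Prop) : U -> Prop :=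
  fun u => exists t, S t /\ f t = u.

Definition is_semilattice_hom {dA dB : Order.disp_t}
  {A : meetSemilatticeType dA} {B : meetSemilatticeType dB} (f : A -> B) : Prop :=
  forall x y, f (x `&` y) = f x `&` f y.

From HB Require Import structures.
From mathcomp Require Import all_boot all_order.
From mathcomp Require Import boolp classical_sets.
Import Order.Theory.
Local Open Scope order_scope.
Local Open Scope classical_set_scope.

(* By Zorn's lemma there is a filter H of B maximal among the filters that
   contain F and pull back to G along f; the filter generated by F and f[G] is
   one of them, by the disjointness hypothesis. H is proper because G is. If
   H = H1 ∩ H2 for filters H1, H2, then G is the intersection of the filters
   f^-1[H1] and f^-1[H2], so by meet irreducibility of G one of them, say
   f^-1[H1], is G; then H1 is again such a filter above H, so H1 = H. *)

Lemma Zorn_bigcup_nonempty {T} {P : set (set T)} {X0 : set T} : P X0 ->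
  (forall C : set (set T), C `<=` P -> C !=set0 -> total_on C subset ->
     P (\bigcup_(X in C) X)) ->
  exists2 M, P M & forall Y, P Y -> M `<=` Y -> Y = M.
Proof.
move=> PX0 Pchain.
(* Adjoining the empty set makes unions of arbitrary chains available; a
   nonempty member of such a chain already lies in P. *)
pose P0 := P `|` [set set0].
have P0chain C : C `<=` P0 -> total_on C subset -> P0 (\bigcup_(X in C) X).
  move=> CP0 Ctot.
  have [[t [X CX Xt]]|empty] := pselect (\bigcup_(X in C) X !=set0); last first.
    by right; apply/seteqP; split=> // t Ct; apply: empty; exists t.
  have inP Y : C Y -> Y !=set0 -> P Y.
    by move=> CY [y Yy]; case: (CP0 Y CY) => // Y0; rewrite Y0 in Yy.
  left; rewrite (_ : \bigcup_(X in C) X = \bigcup_(X in C `&` P) X).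
    apply: Pchain => [Y []//||Y Z [CY _] [CZ _]]; last exact: Ctot.
    by exists X; split=> //; apply: inP CX _; exists t.
  apply/seteqP; split=> y [Y CY Yy]; exists Y => //; last by case: CY.
  by split=> //; apply: inP CY _; exists y.
have [M [P0M Mmax]] := Zorn_bigcup P0chain.
have maxM Y : P Y -> M `<=` Y -> Y = M.
  move=> PY MY; apply/seteqP; split=> //; apply: contrapT => YM.
  by apply: (Mmax Y); [split|left].
exists M => //; case: P0M => // M0.
by rewrite -(maxM X0 PX0) // M0.
Qed.

Section Filters.
Context {d : Order.disp_t} {A : meetSemilatticeType d}.
Implicit Types (S : set A) (C : set (set A)).

Lemma sub_gen_filter S : S `<=` gen_filter S.
Proof. by move=> x Sx X _; apply. Qed.

Lemma gen_filter_filter S : S !=set0 -> is_filter (gen_filter S).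
Proof.
move=> [s Ss]; split; first by exists s; exact: sub_gen_filter.
split=> [x y Sx xy X fX SX|x y Sx Sy X fX SX]; have [_ [Xup Xmeet]] := fX.
- exact: Xup (Sx X fX SX) xy.
- exact: Xmeet (Sx X fX SX) (Sy X fX SX).
Qed.

Lemma bigcup_chain_filter C : C !=set0 -> (forall X, C X -> is_filter X) ->
  total_on C subset -> is_filter (\bigcup_(X in C) X).
Proof.
move=> [X0 CX0] Cfil Ctot; split.
  by have [[x X0x] _] := Cfil X0 CX0; exists x, X0.
split=> [x y [X CX Xx] xy|x y [X CX Xx] [Y CY Yy]].
  by exists X => //; have [_ [Xup _]] := Cfil X CX; exact: Xup xy.
have [XY|YX] := Ctot X Y CX CY.
- by exists Y => //; have [_ [_ Ymeet]] := Cfil Y CY; exact: Ymeet (XY _ Xx) Yy.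
- by exists X => //; have [_ [_ Xmeet]] := Cfil X CX; exact: Xmeet Xx (YX _ Yy).
Qed.

End Filters.

Section FilterLifts.
Context {dA dB : Order.disp_t}.
Context {A : meetSemilatticeType dA} {B : meetSemilatticeType dB}.
Variables (f : A -> B) (F : set B) (G : set A).

Lemma semilattice_hom_homo : is_semilattice_hom f -> {homo f : x y / x <= y}.
Proof. by move=> fhom x y /meet_idPl xy; apply/meet_idPl; rewrite -fhom xy. Qed.

Lemma preimage_filter (H : set B) : is_semilattice_hom f ->
  is_filter H -> (exists a, H (f a)) -> is_filter (f @^-1` H).
Proof.
move=> fhom [_ [Hup Hmeet]] [a Hfa]; split; first by exists a.
split=> [x y Hfx /(semilattice_hom_homo fhom) fxy|x y Hfx Hfy].
- exact: Hup fxy.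
- by rewrite /preimage /= fhom; exact: Hmeet.
Qed.

Definition filter_lift (H : set B) :=
  [/\ is_filter H, F `<=` H & forall a, G a <-> H (f a)].

Lemma gen_filter_lift : is_filter F ->
  (forall b, gen_filter (F `|` img_set f G) b -> ~ img_set f (~` G) b) ->
  filter_lift (gen_filter (F `|` img_set f G)).
Proof.
move=> [[b Fb] _] Kdisj; split.
- by apply: gen_filter_filter; exists b; left.
- by move=> y Fy; apply: sub_gen_filter; left.
- move=> a; split=> [Ga|Kfa]; first by apply: sub_gen_filter; right; exists a.
  by apply: contrapT => nGa; apply: (Kdisj _ Kfa); exists a.
Qed.

Lemma bigcup_chain_lift (C : set (set B)) : C `<=` filter_lift ->
  C !=set0 -> total_on C subset -> filter_lift (\bigcup_(X in C) X).
Proof.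
move=> Clift [X0 CX0] Ctot; have [_ FX0 GX0] := Clift X0 CX0; split.
- by apply: bigcup_chain_filter => [|X /Clift[]|]; first exists X0.
- by move=> b Fb; exists X0 => //; exact: FX0.
- move=> a; split=> [Ga|[X CX Xfa]]; first by exists X0 => //; apply/GX0.
  by have [_ _ ->] := Clift X CX.
Qed.

Lemma maximal_lift_meet_irreducible (H : set B) : is_semilattice_hom f ->
  meet_irreducible G -> filter_lift H ->
  (forall H', filter_lift H' -> H `<=` H' -> H' = H) -> meet_irreducible H.
Proof.
move=> fhom [[[g Gg] _] [[a nGa] Girr]] [Hfil FH GH] Hmax.
split=> //; split; first by exists (f a); rewrite -GH.
move=> H1 H2 H1fil H2fil H12.
have [H1H H2H] : H `<=` H1 /\ H `<=` H2 by split=> b /H12[].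
have pre Hi : is_filter Hi -> H `<=` Hi -> is_filter (f @^-1` Hi).
  by move=> Hifil HHi; apply: preimage_filter => //; exists g; apply/HHi/GH.
have eqH Hi : is_filter Hi -> H `<=` Hi ->
    (forall x, (f @^-1` Hi) x <-> G x) -> forall b, Hi b <-> H b.
  move=> Hifil HHi HiG b; rewrite (Hmax Hi) //; split=> //.
  - by move=> y /FH /HHi.
  - by move=> x; split=> /HiG.
case: (Girr _ _ (pre _ H1fil H1H) (pre _ H2fil H2H)).
- by move=> x; rewrite GH H12.
- by move=> H1G; left; apply: eqH.
- by move=> H2G; right; apply: eqH.
Qed.

End FilterLifts.

Theorem lemma3p6 (dA dB : Order.disp_t)
  (A : meetSemilatticeType dA) (B : meetSemilatticeType dB) (f : A -> B)
  (F : B -> Prop) (G : A -> Prop) :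
  is_semilattice_hom f ->
  is_filter F ->
  meet_irreducible G ->
  (forall a, F (f a) -> G a) ->
  (forall b, gen_filter (fun y => F y \/ img_set f G y) b ->
     ~ img_set f (fun a => ~ G a) b) ->
  exists H : B -> Prop,
    meet_irreducible H /\ (forall b, F b -> H b) /\ (forall a, G a <-> H (f a)).
Proof.
move=> fhom Ffil Girr _ Kdisj.
have [H Hlift Hmax] :=
  Zorn_bigcup_nonempty (gen_filter_lift f F G Ffil Kdisj) (bigcup_chain_lift f F G).
exists H; have [_ FH GH] := Hlift.
split; last by split.
exact: maximal_lift_meet_irreducible fhom Girr Hlift Hmax.
Qed.
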